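(* Let $\mathbf{\Pi}=\langle\mathit{PF},\Pi\rangle$ be a multi-valued probabilistic program such that $\mathrm{SM}''[\mathbf{\Pi}]$ is not empty and $M_{\mathbf{\Pi}}(c=v)>0$ for every probabilistic constant $c$ and every $v\in\mathrm{Dom}(c)$. Then for every interpretation $I$, $I\in\mathrm{SM}'[T(\mathbf{\Pi})]$ if and only if $I\in\mathrm{SM}''[\mathbf{\Pi}]$.
   Context: Stable model semantics: a rule is $A\leftarrow B\wedge N$ ($A$ a possibly empty disjunction of atoms, $B$ a conjunction of atoms, $N$ a formula with every atom occurrence under negation); the reduct $\Pi^I$ of a ground program keeps $A\leftarrow B$ for rules with $I\models N$; $I$ (a set of atoms) is a stable model if it is a minimal model of $\Pi^I$. An $\mathrm{LP}^{\mathrm{MLN}}$ program $\Pi$ is a finite set of weighted rules $w:R$, $w$ real (soft) or the symbol $\alpha$ (hard); $\Pi_I=\{w:R\in\Pi\mid I\models R\}$; $\overline{\cdot}$ drops weights. $\mathrm{SM}'[\Pi]$ is the set of $I$ that are stable models of $\overline{\Pi_I}$ and satisfy $\overline{\Pi^{\rm hard}}$ (the unweighted hard rules). Multi-valued signature: constants $c$ with finite domains $\mathrm{Dom}(c)$; atoms $c=v$, $v\in\mathrm{Dom}(c)$; constants are probabilistic or regular. A multi-valued probabilistic program $\mathbf{\Pi}=\langle\mathit{PF},\Pi\rangle$: $\mathit{PF}$ has, for each probabilistic constant $c$, one declaration $p_1:c=v_1\mid\dots\mid p_n:c=v_n$ ($\{v_i\}=\mathrm{Dom}(c)$ distinct,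 $p_i\in[0,1]$, $\sum p_i=1$), and $M_{\mathbf{\Pi}}(c=v_i)=p_i$; $\Pi$ is a set of rules whose heads contain no atom of a probabilistic constant. $T(\mathbf{\Pi})$ is the $\mathrm{LP}^{\mathrm{MLN}}$ program containing: $\ln(p_i):c=v_i$ if $0<p_i<1$, $\alpha:c=v_i$ if $p_i=1$, $\alpha:\bot\leftarrow c=v_i$ if $p_i=0$; $\alpha:R$ for $R\in\Pi$; $\alpha:\bot\leftarrow c=v_1\wedge c=v_2$ for every constant $c$ and distinct $v_1,v_2\in\mathrm{Dom}(c)$; $\alpha:\bot\leftarrow\neg\bigvee_{v\in\mathrm{Dom}(c)}c=v$ for every probabilistic $c$. $I$ is consistent if it satisfies the last two kinds of constraints; $\mathit{TC}(I)=\{c=v\in I\mid c$ probabilistic$\}$; $\mathrm{SM}''[\mathbf{\Pi}]$ is the set of consistent $I$ that are stable models of $\Pi\cup\mathit{TC}(I)$. *)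

From Stdlib Require Import Reals.
From HB Require Import structures.
From mathcomp Require Import all_boot.

Set Implicit Arguments.
Unset Strict Implicit.
Unset Printing Implicit Defensive.

Section Syntax.
Variable atom : finType.

Inductive formula : Type :=
| FAtom of atom
| FBot
| FTop
| FNeg of formula
| FAnd of formula & formula
| FOr of formula & formula
| FImp of formula & formula.

Fixpoint fsat (I : {set atom}) (f : formula) : bool :=
  match f with
  | FAtom a => a \in I
  | FBot => false
  | FTop => true
  | FNeg g => ~~ fsat I g
  | FAnd g h => fsat I g && fsat I h
  | FOr g h => fsat I g || fsat I h
  | FImp g h => fsat I g ==> fsat I h
  end.

Fixpoint neg_only (f : formula) : bool :=
  match f with
  | FAtom _ => false
  | FBot | FTop | FNeg _ => true
  | FAnd g h | FOr g h | FImp g h => neg_only g && neg_only h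
  end.

(* rule  A <- B /\ N : head = disjunction A (possibly empty),
   pbody = conjunction B of atoms, nbody = N *)
Record rule : Type := Rule { head : seq atom; pbody : seq atom; nbody : formula }.

Definition rsat (I : {set atom}) (r : rule) : bool :=
  (all (fun a => a \in I) (pbody r) && fsat I (nbody r)) ==>
  has (fun a => a \in I) (head r).

Definition models (I : {set atom}) (P : seq rule) : bool := all (rsat I) P.

Definition reduct (P : seq rule) (I : {set atom}) : seq rule :=
  [seq Rule (head r) (pbody r) FTop | r <- P & fsat I (nbody r)].

Definition stable (P : seq rule) (I : {set atom}) : bool :=
  models I (reduct P I) &&
  [forall J : {set atom}, (J \proper I) ==> ~~ models J (reduct P I)].

Definition fact (a : atom) : rule := Rule [:: a] [::] FTop.

Inductive weight : Type := Soft of R | Hard.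

Definition is_hard (w : weight) : bool := if w is Hard then true else false.

Definition wprog := seq (weight * rule).

Definition unweight (P : wprog) : seq rule := map snd P.

Definition sat_part (P : wprog) (I : {set atom}) : wprog :=
  [seq wr <- P | rsat I wr.2].

Definition hard_part (P : wprog) : wprog := [seq wr <- P | is_hard wr.1].

Definition SM' (P : wprog) (I : {set atom}) : bool :=
  stable (unweight (sat_part P I)) I && models I (unweight (hard_part P)).

End Syntax.

Arguments FBot {atom}.
Arguments FTop {atom}.

Section MV.
Variables (C : finType) (D : C -> finType).

(* atoms c = v with v in Dom(c) = D c *)
Definition mvatom : finType := {c : C & D c}.
Definition cv (c : C) (v : D c) : mvatom := existT _ c v.

(* <PF, Pi>: prob c says whether constant c is probabilistic;
   pf c v is the probability p attached to c = v in the declaration of c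
   (only meaningful for probabilistic c); rules is Pi. *)
Record mvprog : Type := MVProg {
  prob : C -> bool;
  pf : forall c : C, D c -> R;
  rules : seq (rule mvatom)
}.
Arguments pf : clear implicits.

Definition mvprog_wf (P : mvprog) : Prop :=
  (forall c, prob P c ->
     (forall v, Rle R0 (pf P c v) /\ Rle (pf P c v) R1) /\
     \big[Rplus/R0]_(v : D c) pf P c v = R1) /\
  all (fun r => all (fun a : mvatom => ~~ prob P (tag a)) (head r)
                && neg_only (nbody r)) (rules P).

Definition M (P : mvprog) (c : C) (v : D c) : R := pf P c v.

(* the weighted rule(s) of T(Pi) generated by p : c = v *)
Definition pf_wrules (p : R) (a : mvatom) : wprog mvatom :=
  match Rlt_dec R0 p, Rlt_dec p R1 with
  | left _, left _ => [:: (Soft (ln p), fact a)]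
  | _, _ =>
    match Req_EM_T p R1 with
    | left _ => [:: (Hard, fact a)]
    | right _ =>
      match Req_EM_T p R0 with
      | left _ => [:: (Hard, Rule [::] [:: a] FTop)]
      | right _ => [::]
      end
    end
  end.

Definition pf_part (P : mvprog) : wprog mvatom :=
  flatten [seq flatten [seq pf_wrules (pf P c v) (cv v) | v <- enum (D c)]
          | c <- enum C & prob P c].

Definition uniq_rules : seq (rule mvatom) :=
  flatten [seq [seq Rule [::] [:: cv vv.1; cv vv.2] FTop
               | vv <- [seq (v1, v2) | v1 <- enum (D c), v2 <- enum (D c)]
               & vv.1 != vv.2]
          | c <- enum C].

Definition bigor (c : C) : formula mvatom :=
  foldr (fun f g => FOr f g) FBot [seq FAtom (cv v) | v <- enum (D c)].

Definition exist_rules (P : mvprog) : seq (rule mvatom) :=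
  [seq Rule [::] [::] (FNeg (bigor c)) | c <- enum C & prob P c].

Definition hardify (P : seq (rule mvatom)) : wprog mvatom :=
  [seq (Hard, r) | r <- P].

Definition T (P : mvprog) : wprog mvatom :=
  pf_part P ++ hardify (rules P) ++ hardify uniq_rules ++ hardify (exist_rules P).

Definition consistent (P : mvprog) (I : {set mvatom}) : bool :=
  models I (uniq_rules ++ exist_rules P).

Definition TC (P : mvprog) (I : {set mvatom}) : seq (rule mvatom) :=
  [seq fact a | a <- enum I & prob P (tag a)].

Definition SM'' (P : mvprog) (I : {set mvatom}) : bool :=
  consistent P I && stable (rules P ++ TC P I) I.

End MV.

Arguments pf {C D} m c v.
Arguments M {C D} P c v.

From Pilot Require Import Defs.
From Stdlib Require Import Reals Lra.
From HB Require Import structures.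
From mathcomp Require Import all_boot.

(* When every probability is positive, each declaration p : c = v contributes to
   T(Pi) exactly the fact c = v, soft if p < 1 and hard if p = 1.  Hence, relative to I, the reduct of T(Pi)_I contains
   Pi^I, the facts TC(I), and constraints true in I, which remain true in every
   J included in I and so do not affect minimality.  The hard facts (p = 1) are
   implied by consistency: positivity makes such a v the only value of c.
   Therefore both semantics ask for the same minimal models. *)

Set Implicit Arguments.
Unset Strict Implicit.
Unset Printing Implicit Defensive.

HB.instance Definition _ :=
  SemiGroup.isComLaw.Build R Rplus (fun x y z => esym (Rplus_assoc x y z)) Rplus_comm.

Lemma Rplus_le_big (T : finType) (f : T -> R) (x y : T) :
  x != y -> (forall z, Rle R0 (f z)) ->
  Rle (Rplus (f x) (f y)) (\big[Rplus/R0]_(z : T) f z).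
Proof.
move=> neq_xy f_ge0.
rewrite (bigD1 x) // (bigD1 y) /=; last by rewrite eq_sym.
have : Rle R0 (\big[Rplus/R0]_(z | (z != x) && (z != y)) f z).
  by apply: (big_ind (Rle R0)) => // *; lra.
lra.
Qed.

Lemma all_flatten (T : Type) (p : pred T) (ss : seq (seq T)) :
  all p (flatten ss) = all (all p) ss.
Proof. by elim: ss => //= s ss IH; rewrite all_cat IH. Qed.

Lemma all_implyb (T : Type) (p q : pred T) (s : seq T) :
  all p s -> all (fun x => p x ==> q x) s = all q s.
Proof. by elim: s => //= x s IH /andP[-> /IH ->]. Qed.

Lemma all_enum (T : finType) (A : {pred T}) (p : pred T) :
  all p (enum A) = [forall (x | x \in A), p x].
Proof.
apply/allP/forall_inP => p_A x; last by rewrite mem_enum; apply: p_A.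
by move=> xA; apply: p_A; rewrite mem_enum.
Qed.

Section StableModels.
Variable atom : finType.
Implicit Types (I J : {set atom}) (r : rule atom) (P : seq (rule atom)).

Definition reduct_rsat I J r : bool :=
  fsat I (nbody r) ==> rsat J (Rule (Defs.head r) (pbody r) FTop).

Lemma models_reduct I J P : models J (reduct P I) = all (reduct_rsat I J) P.
Proof. by rewrite /models /reduct all_map all_filter. Qed.

Lemma reduct_rsat_id I r : reduct_rsat I I r = rsat I r.
Proof. by rewrite /reduct_rsat /rsat /= andbT; case: fsat; case: all. Qed.

Lemma rsat_fact I a : rsat I (fact a) = (a \in I).
Proof. by rewrite /rsat /= orbF. Qed.

Lemma reduct_rsat_fact I J a : reduct_rsat I J (fact a) = (a \in J).
Proof. by rewrite /reduct_rsat /rsat /= orbF. Qed.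

Lemma stable_models P I : stable P I -> models I P.
Proof.
case/andP; rewrite models_reduct => reduct_I _.
by rewrite /models -(eq_all (@reduct_rsat_id I)).
Qed.

Lemma stable_eq P1 P2 I :
  (forall J, J \subset I -> all (reduct_rsat I J) P1 = all (reduct_rsat I J) P2) ->
  stable P1 I = stable P2 I.
Proof.
move=> eqP12; rewrite /stable !models_reduct eqP12 ?subxx //; congr andb.
apply: eq_forallb => J; case: (boolP (J \proper I)) => //= /proper_sub JI.
by rewrite !models_reduct eqP12.
Qed.

Lemma constraints_reduct I J P :
  all (fun r => nilp (Defs.head r)) P -> models I P -> J \subset I ->
  all (reduct_rsat I J) P.
Proof.
move=> head_nil I_P /subsetP JI.
have : all (predI (fun r => nilp (Defs.head r)) (rsat I)) P by rewrite all_predI head_nil.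
apply: sub_all => r /= /andP[/nilP head0].
rewrite /reduct_rsat /rsat /= head0 /= andbT.
rewrite !implybF negb_and => /orP[I_body | /negbTE -> //].
by apply/implyP => _; apply: contraNN I_body; apply: sub_all => a /JI.
Qed.

Lemma all_unweight_sat (q : pred (rule atom)) (P : wprog atom) I :
  all q (unweight (sat_part P I)) = all (fun wr => rsat I wr.2 ==> q wr.2) P.
Proof. by rewrite all_map all_filter. Qed.

Lemma models_unweight_hard (P : wprog atom) I :
  models I (unweight (hard_part P)) = all (fun wr => is_hard wr.1 ==> rsat I wr.2) P.
Proof. by rewrite /models all_map all_filter. Qed.

End StableModels.

Section MultiValued.
Variables (C : finType) (D : C -> finType).
Implicit Types (I J : {set mvatom D}).

Lemma pf_wrules_fact p (a : mvatom D) : Rlt R0 p -> Rle p R1 ->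
  pf_wrules p a = [:: (if Rlt_dec p R1 then Soft (ln p) else Hard, fact a)].
Proof.
rewrite /pf_wrules => p_gt0 p_le1.
case: Rlt_dec => // _; case: Rlt_dec => // p_ge1.
by case: Req_EM_T => // ?; lra.
Qed.

Lemma fsat_bigor I (c : C) :
  fsat I (bigor D c) = has (fun v => cv v \in I) (enum (D c)).
Proof. by rewrite /bigor; elim: (enum (D c)) => //= v s ->. Qed.

Lemma all_hardify (q : pred (weight * rule (mvatom D))) (s : seq (rule (mvatom D))) :
  all q (hardify s) = all (fun r => q (Hard, r)) s.
Proof. exact: all_map. Qed.

Lemma constraints_nil (P : mvprog D) :
  all (fun r => nilp (Defs.head r)) (uniq_rules D ++ exist_rules P).
Proof.
rewrite all_cat /uniq_rules /exist_rules all_flatten !all_map all_filter.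
apply/andP; split; apply/allP => c _ //=; last exact/implyP.
by rewrite all_map all_filter; apply/allP => vv _; apply/implyP.
Qed.

End MultiValued.

Section Translation.
Variables (C : finType) (D : C -> finType) (P : mvprog D).
Hypothesis pf_gt0 : forall c (v : D c), prob P c -> Rlt R0 (pf P c v).
Hypothesis pf_le1 : forall c (v : D c), prob P c -> Rle (pf P c v) R1.
Hypothesis pf_sum1 : forall c, prob P c -> \big[Rplus/R0]_(v : D c) pf P c v = R1.
Implicit Types (I J : {set mvatom D}).

Definition certain_in I : Prop :=
  forall c (v : D c), prob P c -> pf P c v = R1 -> cv v \in I.

Definition prob_sub I J : bool :=
  [forall c, prob P c ==> [forall v : D c, (cv v \in I) ==> (cv v \in J)]].

Lemma all_pf_part (q : pred (weight * rule (mvatom D))) :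
  all q (pf_part P) =
  [forall c, prob P c ==> [forall v : D c, all q (pf_wrules (pf P c v) (cv v))]].
Proof.
rewrite /pf_part all_flatten all_map all_filter all_enum.
by apply: eq_forallb => c /=; rewrite all_flatten all_map all_enum.
Qed.

Lemma pf_wrules_pf c (v : D c) : prob P c ->
  pf_wrules (pf P c v) (cv v) =
  [:: (if Rlt_dec (pf P c v) R1 then Soft (ln (pf P c v)) else Hard, fact (cv v))].
Proof. by move=> c_prob; rewrite pf_wrules_fact; [| apply: pf_gt0 | apply: pf_le1]. Qed.

Lemma models_hard_pf_part I :
  models I (unweight (hard_part (pf_part P))) <-> certain_in I.
Proof.
rewrite models_unweight_hard all_pf_part; split.
- move=> /forallP I_pf c v c_prob p1.
  move/implyP: (I_pf c) => /(_ c_prob) /forallP /(_ v).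
  rewrite pf_wrules_pf //= p1 rsat_fact andbT.
  by case: Rlt_dec => [? | _] //; lra.
- move=> certain; apply/forallP => c; apply/implyP => c_prob; apply/forallP => v.
  rewrite pf_wrules_pf //= rsat_fact andbT.
  case: Rlt_dec => //= p_ge1; apply: certain => //.
  by have := pf_le1 v c_prob; lra.
Qed.

Lemma reduct_pf_part I J :
  all (fun wr => rsat I wr.2 ==> reduct_rsat I J wr.2) (pf_part P) = prob_sub I J.
Proof.
rewrite all_pf_part; apply: eq_forallb => c; case: (boolP (prob P c)) => //= c_prob.
apply: eq_forallb => v.
by rewrite pf_wrules_pf //= rsat_fact reduct_rsat_fact andbT.
Qed.

Lemma reduct_TC I J : all (reduct_rsat I J) (TC P I) = prob_sub I J.
Proof.
rewrite /TC all_map all_filter all_enum.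
apply/forall_inP/forallP => [sub c | sub [c v] /= vI].
- apply/implyP => c_prob; apply/forallP => v; apply/implyP => vI.
  by have := sub (cv v) vI; rewrite /= c_prob reduct_rsat_fact.
- apply/implyP => c_prob; rewrite reduct_rsat_fact.
  exact: (implyP (forallP (implyP (sub c) c_prob) v) vI).
Qed.

Lemma consistent_certain I : consistent P I -> certain_in I.
Proof.
rewrite /consistent /models all_cat => /andP[_].
rewrite /exist_rules all_map all_filter all_enum => /forallP exists_value c v c_prob p1.
move/implyP: (exists_value c) => /(_ isT) /implyP /(_ c_prob).
rewrite /rsat /= fsat_bigor implybF negbK => /hasP[v' _ v'I].
have [-> // | neq_vv'] := eqVneq v v'.
have := Rplus_le_big neq_vv' (fun z => Rlt_le _ _ (pf_gt0 z c_prob)).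
by rewrite pf_sum1 // p1; have := pf_gt0 v' c_prob; lra.
Qed.

Lemma models_hard_T I :
  models I (unweight (hard_part (T P))) <->
  [/\ certain_in I, models I (rules P) & consistent P I].
Proof.
rewrite models_unweight_hard /T !all_cat !all_hardify /= -models_unweight_hard.
rewrite /consistent /models all_cat.
split=> [/and4P[/models_hard_pf_part ? ? ? ?] | [/models_hard_pf_part pf_I -> /andP[-> ->]]].
  by split=> //; apply/andP.
by rewrite /= andbT.
Qed.

Lemma stable_T_TC I : consistent P I -> models I (rules P) ->
  stable (unweight (sat_part (T P) I)) I = stable (rules P ++ TC P I) I.
Proof.
move=> consistent_I rules_I; apply: stable_eq => J JI.
have constraints_J := constraints_reduct (constraints_nil P) consistent_I JI.
move: consistent_I constraints_J; rewrite /consistent /models !all_cat.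
move=> /andP[uniq_I exist_I] /andP[uniq_J exist_J].
rewrite all_unweight_sat /T !all_cat !all_hardify reduct_pf_part reduct_TC /=.
by rewrite !(all_implyb (reduct_rsat I J)) // uniq_J exist_J /= andbT andbC.
Qed.

End Translation.

Theorem lemma7 (C : finType) (D : C -> finType) (P : mvprog D) :
  mvprog_wf P ->
  (exists I : {set mvatom D}, SM'' P I) ->
  (forall (c : C) (v : D c), prob P c -> Rlt R0 (M P c v)) ->
  forall I : {set mvatom D}, SM' (T P) I <-> SM'' P I.
Proof.
move=> [pf_dist _] _ pf_gt0 I.
have pf_le1 c (v : D c) (c_prob : prob P c) := proj2 (proj1 (pf_dist c c_prob) v).
have pf_sum1 c (c_prob : prob P c) := proj2 (pf_dist c c_prob).
rewrite /SM' /SM''; split.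
- case/andP=> stable_T /(models_hard_T pf_gt0 pf_le1) [_ rules_I consistent_I].
  by rewrite consistent_I -(stable_T_TC pf_gt0 pf_le1 consistent_I rules_I).
- case/andP=> consistent_I stable_I.
  have rules_I : models I (rules P).
    by move: (stable_models stable_I); rewrite /models all_cat => /andP[].
  rewrite (stable_T_TC pf_gt0 pf_le1 consistent_I rules_I) stable_I.
  apply/(models_hard_T pf_gt0 pf_le1); split=> //.
  exact: (consistent_certain pf_gt0 pf_sum1 consistent_I).
Qed.
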